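(* The center of the group $QI(\mathbb{R})$ of quasi-isometries of the real line is trivial.
   Context: A map $f:\mathbb{R}\to\mathbb{R}$ is a quasi-isometry if there is $K>1$ such that $\frac{1}{K}|x_1-x_2|-K\le |f(x_1)-f(x_2)|\le K|x_1-x_2|+K$ for all $x_1,x_2\in\mathbb{R}$, and every $y\in\mathbb{R}$ is within distance $K$ of some $f(x)$. Two quasi-isometries $f,g$ are equivalent if $\sup_{x\in\mathbb{R}}|f(x)-g(x)|<\infty$. $QI(\mathbb{R})$ is the set of equivalence classes $[f]$ of quasi-isometries $\mathbb{R}\to\mathbb{R}$, a group under $[f]\cdot[g]=[f\circ g]$. *)

From Stdlib Require Import Reals.
Open Scope R_scope.

Definition quasi_isometry (f : R -> R) : Prop :=
  exists K : R, 1 < K /\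
    (forall x1 x2 : R,
        / K * Rabs (x1 - x2) - K <= Rabs (f x1 - f x2) /\
        Rabs (f x1 - f x2) <= K * Rabs (x1 - x2) + K) /\
    (forall y : R, exists x : R, Rabs (y - f x) <= K).

Definition qi_equiv (f g : R -> R) : Prop :=
  exists B : R, forall x : R, Rabs (f x - g x) <= B.

Definition qi_central (f : R -> R) : Prop :=
  forall g : R -> R, quasi_isometry g ->
    qi_equiv (fun x => f (g x)) (fun x => g (f x)).

From Stdlib Require Import Reals Lra Lia Arith Classical ClassicalEpsilon.
From Coquelicot Require Import Coquelicot.
Open Scope R_scope.

(* If [f] is not at bounded distance from the identity, choose points [y j]
   with [|f (y j) - y j| >= j], growing so fast that [f (y j)] stays at
   distance [>= j] from every [y i].  The map [g x = x + d(x, Y)/2], where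
   [Y] is the set of the [y i], is a quasi-isometry fixing [Y].  Hence
   [f (g (y j)) = f (y j)] while [g (f (y j)) >= f (y j) + j/2], so [f] does
   not commute with [g] up to bounded error. *)

Section DistanceToSequence.

Variable y : nat -> R.

Definition dist_seq (x : R) : R :=
  real (Inf_seq (fun n => Finite (Rabs (x - y n)))).

Lemma dist_seq_is_inf x :
  is_inf_seq (fun n => Finite (Rabs (x - y n))) (dist_seq x).
Proof.
  unfold dist_seq.
  pose proof (Inf_seq_correct (fun n => Finite (Rabs (x - y n)))) as H.
  destruct (Inf_seq _) as [l| |]; simpl in *.
  - exact H.
  - specialize (H (Rabs (x - y 0%nat)) 0%nat). simpl in H. lra.
  - destruct (H 0) as [n Hn]. simpl in Hn. pose proof (Rabs_pos (x - y n)). lra.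
Qed.

Lemma dist_seq_le x n : dist_seq x <= Rabs (x - y n).
Proof.
  apply Rnot_lt_le; intro Hlt.
  destruct (dist_seq_is_inf x (mkposreal (dist_seq x - Rabs (x - y n)) ltac:(lra))) as [H _].
  specialize (H n). simpl in H. lra.
Qed.

Lemma dist_seq_glb x D : (forall n, D <= Rabs (x - y n)) -> D <= dist_seq x.
Proof.
  intro HD. apply Rnot_lt_le; intro Hlt.
  destruct (dist_seq_is_inf x (mkposreal (D - dist_seq x) ltac:(lra))) as [_ [n Hn]].
  specialize (HD n). simpl in Hn. lra.
Qed.

Lemma dist_seq_ge0 x : 0 <= dist_seq x.
Proof. apply dist_seq_glb. intro n. apply Rabs_pos. Qed.

Lemma dist_seq_at n : dist_seq (y n) = 0.
Proof.
  pose proof (dist_seq_le (y n) n) as H.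
  rewrite Rminus_diag, Rabs_R0 in H. pose proof (dist_seq_ge0 (y n)). lra.
Qed.

Lemma dist_seq_lipschitz x x' : Rabs (dist_seq x - dist_seq x') <= Rabs (x - x').
Proof.
  assert (Hle : forall a b, dist_seq a - Rabs (a - b) <= dist_seq b).
  { intros a b. apply dist_seq_glb. intro n.
    pose proof (dist_seq_le a n).
    pose proof (Rabs_triang (a - b) (b - y n)).
    replace (a - b + (b - y n)) with (a - y n) in * by ring. lra. }
  pose proof (Hle x x'). pose proof (Hle x' x).
  rewrite (Rabs_minus_sym x' x) in *. apply Rabs_le. lra.
Qed.

End DistanceToSequence.

Lemma lipschitz_continuity (h : R -> R) (L : R) :
  (forall x x', Rabs (h x - h x') <= L * Rabs (x - x')) -> continuity h.
Proof.
  intros Hh x eps Heps.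
  assert (HL : 0 < Rabs L + 1) by (pose proof (Rabs_pos L); lra).
  exists (eps / (Rabs L + 1)). split; [apply Rdiv_lt_0_compat; lra |].
  intros z [_ Hz]. simpl in *. unfold R_dist in *.
  apply (Rmult_lt_compat_l (Rabs L + 1)) in Hz; [| lra].
  replace ((Rabs L + 1) * (eps / (Rabs L + 1))) with eps in Hz by (field; lra).
  pose proof (Hh z x). pose proof (Rle_abs L). pose proof (Rabs_pos (z - x)).
  nra.
Qed.

(* [x + phi x] is bi-Lipschitz with constants [1 - L] and [1 + L], and onto
   by the intermediate value theorem. *)
Lemma contraction_perturbation_qi (phi : R -> R) (L : R) :
  0 <= L < 1 ->
  (forall x x', Rabs (phi x - phi x') <= L * Rabs (x - x')) ->
  quasi_isometry (fun x => x + phi x).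
Proof.
  intros HL Hphi.
  set (c := 1 - L).
  assert (Hc : 0 < c) by (unfold c; lra).
  assert (Hbilip : forall x x', c * Rabs (x - x') <= Rabs (x + phi x - (x' + phi x'))
                           /\ Rabs (x + phi x - (x' + phi x')) <= (1 + L) * Rabs (x - x')).
  { intros x x'. pose proof (Hphi x x') as He.
    replace (x + phi x - (x' + phi x')) with ((x - x') + (phi x - phi x')) by ring.
    set (d := x - x') in *. set (e := phi x - phi x') in *.
    pose proof (Rabs_triang d e).
    pose proof (Rabs_triang (d + e) (- e)) as Hback.
    rewrite Rabs_Ropp in Hback. replace (d + e + - e) with d in Hback by ring.
    unfold c. lra. }
  exists (/ c + 1). split; [| split].
  - pose proof (Rinv_0_lt_compat c Hc). lra.
  - intros x1 x2. destruct (Hbilip x1 x2) as [Hlo Hhi].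
    pose proof (Rabs_pos (x1 - x2)).
    assert (Hinv : / (/ c + 1) <= c).
    { rewrite <- (Rinv_inv c) at 2. apply Rinv_le_contravar.
      - apply Rinv_0_lt_compat, Hc.
      - lra. }
    assert (Hbig : 1 + L <= / c + 1).
    { assert (c * / c = 1) by (field; lra).
      apply Rmult_le_reg_l with c; [exact Hc |]. unfold c in *. nra. }
    split; nra.
  - intro z.
    set (r := (Rabs (phi z) + 1) / c).
    assert (Hr : 0 < r) by (unfold r; pose proof (Rabs_pos (phi z)); apply Rdiv_lt_0_compat; lra).
    assert (Hcr : c * r = Rabs (phi z) + 1) by (unfold r; field; lra).
    pose proof (Rle_abs (phi z)) as Hz1. pose proof (Rabs_maj2 (phi z)) as Hz2.
    assert (Hleft : z - r + phi (z - r) - z < 0).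
    { pose proof (Hphi (z - r) z) as H. replace (z - r - z) with (- r) in H by ring.
      rewrite Rabs_Ropp, (Rabs_right r) in H by lra.
      pose proof (Rle_abs (phi (z - r) - phi z)). unfold c in Hcr. nra. }
    assert (Hright : 0 < z + r + phi (z + r) - z).
    { pose proof (Hphi (z + r) z) as H. replace (z + r - z) with r in H by ring.
      rewrite (Rabs_right r) in H by lra.
      pose proof (Rabs_maj2 (phi (z + r) - phi z)). unfold c in Hcr. nra. }
    destruct (IVT (fun x => x + phi x - z) (z - r) (z + r)) as [x [_ Hx]];
      [| lra | exact Hleft | exact Hright |].
    + apply continuity_minus; [| apply continuity_const; intros ? ?; reflexivity].
      apply (lipschitz_continuity _ (1 + L)). intros. apply Hbilip.
    + exists x. simpl in Hx. replace (z - (x + phi x)) with 0 by lra.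
      rewrite Rabs_R0. pose proof (Rinv_0_lt_compat c Hc). lra.
Qed.

Lemma quasi_isometry_linear_bounds (f : R -> R) :
  quasi_isometry f ->
  exists K C, 1 < K /\ 0 <= C /\
    forall z, Rabs (f z) <= K * Rabs z + C /\ Rabs z <= K * (Rabs (f z) + C).
Proof.
  intros [K [HK [Hbi _]]].
  exists K, (K + Rabs (f 0)). split; [exact HK | split].
  { pose proof (Rabs_pos (f 0)). lra. }
  intro z. destruct (Hbi z 0) as [Hlo Hhi]. rewrite Rminus_0_r in Hlo, Hhi.
  pose proof (Rabs_triang_inv (f z) (f 0)).
  pose proof (Rabs_triang (f z) (- f 0)) as Htri. rewrite Rabs_Ropp in Htri.
  split; [lra |].
  apply (Rmult_le_compat_l K) in Hlo; [| lra].
  rewrite Rmult_minus_distr_l, <- Rmult_assoc, Rinv_r, Rmult_1_l in Hlo by lra.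
  unfold Rminus in Hlo. nra.
Qed.

Lemma not_qi_equiv_unbounded (f g : R -> R) :
  ~ qi_equiv f g -> forall N, exists x, N < Rabs (f x - g x).
Proof.
  intros Hfg N. apply NNPP. intro Hbounded. apply Hfg.
  exists N. intro x. apply Rnot_lt_le. intro Hx. apply Hbounded. now exists x.
Qed.

Section SeparatedSequence.

Variables (f : R -> R) (K C : R).
Hypotheses (HK : 1 <= K) (HC : 0 <= C)
  (f_upper : forall z, Rabs (f z) <= K * Rabs z + C)
  (f_lower : forall z, Rabs z <= K * (Rabs (f z) + C)).

Lemma far_displaced_point :
  (forall N, exists x, N < Rabs (f x - x)) ->
  forall M, exists x, M <= Rabs x /\ M <= Rabs (f x - x).
Proof.
  intros Hdisp M.
  destruct (Hdisp ((K + 1) * Rabs M + C)) as [x Hx].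
  exists x. pose proof (Rle_abs M). pose proof (Rabs_pos M).
  pose proof (Rabs_triang (f x) (- x)) as Htri.
  rewrite Rabs_Ropp in Htri. fold (f x - x) in Htri.
  pose proof (f_upper x).
  assert (Rabs M < Rabs x) by (apply (Rmult_lt_reg_l (K + 1)); lra).
  split; nra.
Qed.

Lemma exists_sparse_seq :
  (forall M, exists x, M <= Rabs x /\ M <= Rabs (f x - x)) ->
  exists y : nat -> R,
    (forall j, INR j <= Rabs (f (y j) - y j)) /\
    (forall m, K * (Rabs (y m) + C + INR (S m)) <= Rabs (y (S m))).
Proof.
  intro Hfar. destruct (choice _ Hfar) as [pick Hpick].
  pose (y := fix y n :=
    match n with
    | O => pick 0
    | S m => pick (K * (Rabs (y m) + C + INR (S m)))
    end).
  exists y. split.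
  - intros [| m].
    + exact (proj2 (Hpick 0)).
    + pose proof (proj2 (Hpick (K * (Rabs (y m) + C + INR (S m))))) as Hdisp.
      pose proof (pos_INR (S m)). pose proof (Rabs_pos (y m)).
      change (pick (K * (Rabs (y m) + C + INR (S m)))) with (y (S m)) in Hdisp.
      nra.
  - intro m. exact (proj1 (Hpick _)).
Qed.

Variable y : nat -> R.
Hypotheses
  (y_displaced : forall j, INR j <= Rabs (f (y j) - y j))
  (y_growth : forall m, K * (Rabs (y m) + C + INR (S m)) <= Rabs (y (S m))).

Lemma sparse_seq_abs_mono i j : (i <= j)%nat -> Rabs (y i) <= Rabs (y j).
Proof.
  induction 1 as [| j _ IH]; [lra |].
  pose proof (y_growth j). pose proof (pos_INR (S j)). pose proof (Rabs_pos (y j)).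
  nra.
Qed.

(* For [i < j] the point [f (y j)] lies beyond [y i] by the lower bound on [f];
   for [i > j] the point [y i] lies beyond [f (y j)] by the upper bound. *)
Lemma sparse_seq_separated i j : INR j <= Rabs (f (y j) - y i).
Proof.
  destruct (lt_eq_lt_dec i j) as [[Hij | <-] | Hji]; [| apply y_displaced |].
  - destruct j as [| m]; [lia |].
    pose proof (sparse_seq_abs_mono i m ltac:(lia)).
    pose proof (y_growth m). pose proof (f_lower (y (S m))).
    pose proof (Rabs_triang_inv (f (y (S m))) (y i)).
    assert (Rabs (y m) + INR (S m) <= Rabs (f (y (S m)))).
    { apply (Rmult_le_reg_l K); lra. }
    lra.
  - pose proof (sparse_seq_abs_mono (S j) i Hji).
    pose proof (y_growth j). pose proof (f_upper (y j)).
    pose proof (Rabs_triang_inv (y i) (f (y j))) as Hfar.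
    rewrite Rabs_minus_sym in Hfar.
    rewrite S_INR in *. pose proof (pos_INR j). pose proof (Rabs_pos (y j)).
    nra.
Qed.

End SeparatedSequence.

Lemma exists_separated_seq (f : R -> R) (K C : R) :
  1 <= K -> 0 <= C ->
  (forall z, Rabs (f z) <= K * Rabs z + C /\ Rabs z <= K * (Rabs (f z) + C)) ->
  ~ qi_equiv f (fun x => x) ->
  exists y : nat -> R, forall i j, INR j <= Rabs (f (y j) - y i).
Proof.
  intros HK HC Hbounds Hneq.
  assert (f_upper : forall z, Rabs (f z) <= K * Rabs z + C) by apply Hbounds.
  assert (f_lower : forall z, Rabs z <= K * (Rabs (f z) + C)) by apply Hbounds.
  destruct (exists_sparse_seq f K C HK HC
              (far_displaced_point f K C HK HC f_upper (not_qi_equiv_unbounded _ _ Hneq)))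
    as [y [Hdisp Hgrowth]].
  exists y. exact (sparse_seq_separated f K C HK HC f_upper f_lower y Hdisp Hgrowth).
Qed.

Lemma quasi_isometry_add_half_dist_seq (y : nat -> R) :
  quasi_isometry (fun x => x + dist_seq y x / 2).
Proof.
  apply (contraction_perturbation_qi _ (/ 2)); [lra |].
  intros x x'. pose proof (dist_seq_lipschitz y x x').
  replace (dist_seq y x / 2 - dist_seq y x' / 2)
    with (/ 2 * (dist_seq y x - dist_seq y x')) by field.
  rewrite Rabs_mult, (Rabs_right (/ 2)) by lra. lra.
Qed.

Theorem theorem1 : forall f : R -> R,
  quasi_isometry f -> qi_central f -> qi_equiv f (fun x => x).
Proof.
  intros f Hf Hcentral. apply NNPP. intro Hneq.
  destruct (quasi_isometry_linear_bounds f Hf) as (K & C & HK & HC & Hbounds).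
  destruct (exists_separated_seq f K C ltac:(lra) HC Hbounds Hneq) as [y Hsep].
  destruct (Hcentral _ (quasi_isometry_add_half_dist_seq y)) as [B HB].
  destruct (INR_unbounded (2 * B)) as [j Hj].
  specialize (HB (y j)). simpl in HB.
  rewrite dist_seq_at, Rdiv_0_l, Rplus_0_r in HB.
  set (d := dist_seq y (f (y j))) in HB.
  replace (f (y j) - (f (y j) + d / 2)) with (- (d / 2)) in HB by ring.
  assert (Hd : INR j <= d) by (apply dist_seq_glb; intro i; apply Hsep).
  pose proof (pos_INR j).
  rewrite Rabs_Ropp, Rabs_right in HB by lra. lra.
Qed.
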